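(* Consider the GBDF4 coefficients $(a_0,\dots,a_3)=\big(\tfrac{2\beta^3+9\beta^2+11\beta+3}{12},\tfrac{-6\beta^3-21\beta^2-9\beta+13}{12},\tfrac{6\beta^3+15\beta^2-3\beta-5}{12},\tfrac{-2\beta^3-3\beta^2+\beta+1}{12}\big)$, $(b_0,\dots,b_4)=\big(\tfrac{\beta^3+3\beta^2+2\beta}{6},\tfrac{-\beta^3-2\beta^2+\beta+2}{2},\tfrac{\beta^3+\beta^2-2\beta}{2},\tfrac{\beta-\beta^3}{6},0\big)$, $(c_0,\dots,c_3)=\big(\tfrac{\beta^3+6\beta^2+11\beta+6}{6},\tfrac{-\beta^3-5\beta^2-6\beta}{2},\tfrac{\beta^3+4\beta^2+3\beta}{2},\tfrac{-\beta^3-3\beta^2-2\beta}{6}\big)$. For $\beta\ge1$, $$\sigma_{\mathrm{F}}\ge1,\quad\sigma_{\mathrm{E}}\ge\frac{4\beta^3+18\beta^2+20\beta+3}{4(\beta^3+3\beta^2+\beta-1)},\quad\lambda_{\mathrm{I}}\le\frac{4\beta^3+6\beta^2-4\beta-3}{4(\beta^3+3\beta^2+\beta-1)},$$ so that $\mathfrak{I}_{\mathrm{IE}}\le\dfrac{4\beta^3+6\beta^2-4\beta-3}{4\beta^3+18\beta^2+20\beta+3}$. If $\beta=9$, then $\sigma_{\mathrm{F}}\le\frac{49}{45}$, $\sigma_{\mathrm{E}}\le\frac{2319}{1960}$, $\lambda_{\mathrm{I}}\ge\frac{1641}{1960}$, so that $\mathfrak{I}_{\mathrm{IE}}\ge\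frac{547}{773}$.
   Context: For coefficient vectors $(a_j)_{j=0}^{\mathrm{k}-1}$, $(b_j)_{j=0}^{\mathrm{k}}$, $(c_j)_{j=0}^{\mathrm{k}-1}$ define $a(\theta)=\sum_j a_je^{\imath j\theta}$, $b(\theta)=\sum_j b_je^{\imath j\theta}$, $c(\theta)=\sum_jc_je^{\imath j\theta}$ and $\sigma_{\mathrm{F}}=\max_{\theta\in[0,2\pi)}|1/a(\theta)|$, $\sigma_{\mathrm{E}}=\max_{\theta\in[0,2\pi)}|c(\theta)/a(\theta)|$, $\lambda_{\mathrm{I}}=\min_{\theta\in[0,2\pi)}\Re[b(\theta)/a(\theta)]$, $\mathfrak{I}_{\mathrm{IE}}=\lambda_{\mathrm{I}}/\sigma_{\mathrm{E}}$. Here $\mathrm{k}=4$. *)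

From Stdlib Require Import Reals List.
Import ListNotations.
From Coquelicot Require Import Coquelicot.
Open Scope R_scope.

Definition Cexpi (t : R) : C := (cos t, sin t).

Fixpoint trig_poly_aux (l : list R) (j : nat) (theta : R) : C :=
  match l with
  | nil => RtoC 0
  | x :: l' => Cplus (Cmult (RtoC x) (Cexpi (INR j * theta)))
                     (trig_poly_aux l' (S j) theta)
  end.

Definition trig_poly (l : list R) (theta : R) : C := trig_poly_aux l 0 theta.

Definition IsMaxOn (f : R -> R) (m : R) : Prop :=
  (exists t, 0 <= t < 2 * PI /\ f t = m) /\
  (forall t, 0 <= t < 2 * PI -> f t <= m).

Definition IsMinOn (f : R -> R) (m : R) : Prop :=
  (exists t, 0 <= t < 2 * PI /\ f t = m) /\
  (forall t, 0 <= t < 2 * PI -> m <= f t).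

Definition gbdf4_a (b : R) : list R :=
  [ (2*b^3 + 9*b^2 + 11*b + 3) / 12 ;
    (-6*b^3 - 21*b^2 - 9*b + 13) / 12 ;
    (6*b^3 + 15*b^2 - 3*b - 5) / 12 ;
    (-2*b^3 - 3*b^2 + b + 1) / 12 ].

Definition gbdf4_b (b : R) : list R :=
  [ (b^3 + 3*b^2 + 2*b) / 6 ;
    (-b^3 - 2*b^2 + b + 2) / 2 ;
    (b^3 + b^2 - 2*b) / 2 ;
    (b - b^3) / 6 ;
    0 ].

Definition gbdf4_c (b : R) : list R :=
  [ (b^3 + 6*b^2 + 11*b + 6) / 6 ;
    (-b^3 - 5*b^2 - 6*b) / 2 ;
    (b^3 + 4*b^2 + 3*b) / 2 ;
    (-b^3 - 3*b^2 - 2*b) / 6 ].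

Definition sigmaF_fun (b : R) (t : R) : R :=
  Cmod (Cinv (trig_poly (gbdf4_a b) t)).
Definition sigmaE_fun (b : R) (t : R) : R :=
  Cmod (Cdiv (trig_poly (gbdf4_c b) t) (trig_poly (gbdf4_a b) t)).
Definition lambdaI_fun (b : R) (t : R) : R :=
  Re (Cdiv (trig_poly (gbdf4_b b) t) (trig_poly (gbdf4_a b) t)).

From Stdlib Require Import Reals Lra List.
From Coquelicot Require Import Coquelicot.
Open Scope R_scope.

(* Since e^{ij theta} = T_j(cos theta) + i sin theta U_{j-1}(cos theta) with Chebyshev polynomials
   T, U, the quantities |a|^2, |c|^2 and Re(b conj a) are polynomials in x = cos theta, so the
   three symbols are continuous functions of x in [-1, 1] and attain their extrema there.
   Division by a is harmless: in y = 1 - x and u = beta - 1 one has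
   |a|^2 = 1 + y/6 - q y^2 + r y^3 with q, r > 0 and 4 q^3 < 27 r^2, and the cubic
   r y^3 - q y^2 is bounded below by -4 q^3 / (27 r^2) on y >= 0.  The general bounds are the
   values of the symbols at theta = 0 and theta = pi; for beta = 9 the reverse bounds reduce to
   nonnegativity of explicit cubics in x on [-1, 1]. *)

Lemma sin_pow2 (t : R) : sin t ^ 2 = 1 - cos t ^ 2.
Proof. rewrite <- !Rsqr_pow2; apply sin2. Qed.

Lemma acos_in_period (x : R) : 0 <= acos x < 2 * PI.
Proof. pose proof (acos_bound x); pose proof PI_RGT_0; lra. Qed.

Lemma inv_sqrt_le (d k : R) : 0 < k -> k^2 <= d -> / sqrt d <= / k.
Proof.
  intros Hk Hd; apply Rinv_le_contravar; [exact Hk|].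
  rewrite <- (sqrt_pow2 k) by lra; apply sqrt_le_1_alt, Hd.
Qed.

Lemma sqrt_div_le (c d k : R) : 0 < d -> 0 <= k -> c <= k^2 * d -> sqrt (c / d) <= k.
Proof.
  intros Hd Hk Hc; rewrite <- (sqrt_pow2 k) by exact Hk; apply sqrt_le_1_alt.
  apply Rle_div_l; [exact Hd | lra].
Qed.

Lemma div_le_div (a b c d : R) : 0 < c -> c <= d -> 0 <= b -> a <= b -> a / d <= b / c.
Proof.
  intros Hc Hd Hb Hab; apply Rle_trans with (b / d).
  - apply Rmult_le_compat_r; [apply Rlt_le, Rinv_0_lt_compat |]; lra.
  - apply Rmult_le_compat_l; [exact Hb | apply Rinv_le_contravar; lra].
Qed.

Lemma cubic_pos_of_discriminant (q r y : R) :
  0 < r -> 0 <= y -> 4 * q^3 < 27 * r^2 -> 0 < 1 - q * y^2 + r * y^3.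
Proof.
  intros Hr Hy Hdisc.
  assert (0 <= y^2) by (apply pow_le; exact Hy).
  assert (0 <= y^3) by (apply pow_le; exact Hy).
  destruct (Rle_or_lt 0 q) as [Hq | Hq]; [| nra].
  assert (Hfactor : 27 * r^2 * (r * y^3 - q * y^2) + 4 * q^3
                    = (3 * r * y - 2 * q)^2 * (3 * r * y + q)) by ring.
  assert (0 <= (3 * r * y - 2 * q)^2 * (3 * r * y + q))
    by (apply Rmult_le_pos; [apply pow2_ge_0 | nra]).
  nra.
Qed.

Lemma IsMaxOn_cos_comp (f g : R -> R) :
  (forall t, f t = g (cos t)) ->
  (forall x, -1 <= x <= 1 -> continuity_pt g x) ->
  exists x, -1 <= x <= 1 /\ IsMaxOn f (g x).
Proof.
  intros Hfg Hg.
  destruct (continuity_ab_maj g (-1) 1 ltac:(lra) Hg) as [x [Hmax Hx]].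
  exists x; split; [exact Hx | split].
  - exists (acos x); rewrite Hfg, cos_acos by exact Hx; split; [apply acos_in_period | reflexivity].
  - intros t _; rewrite Hfg; apply Hmax, COS_bound.
Qed.

Lemma IsMinOn_cos_comp (f g : R -> R) :
  (forall t, f t = g (cos t)) ->
  (forall x, -1 <= x <= 1 -> continuity_pt g x) ->
  exists x, -1 <= x <= 1 /\ IsMinOn f (g x).
Proof.
  intros Hfg Hg.
  destruct (continuity_ab_min g (-1) 1 ltac:(lra) Hg) as [x [Hmin Hx]].
  exists x; split; [exact Hx | split].
  - exists (acos x); rewrite Hfg, cos_acos by exact Hx; split; [apply acos_in_period | reflexivity].
  - intros t _; rewrite Hfg; apply Hmin, COS_bound.
Qed.

(* [cheb j x = (T_j x, U_{j-1} x)]: the second component is shifted by one from the usual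
   Chebyshev polynomials of the second kind, so that [cheb_U 0 = 0]. *)
Fixpoint cheb (j : nat) (x : R) : R * R :=
  match j with
  | O => (1, 0)
  | S j => let (T, U) := cheb j x in (x * T - (1 - x^2) * U, T + x * U)
  end.

Definition cheb_T (j : nat) (x : R) : R := fst (cheb j x).
Definition cheb_U (j : nat) (x : R) : R := snd (cheb j x).

Lemma cheb_S (j : nat) (x : R) :
  cheb_T (S j) x = x * cheb_T j x - (1 - x^2) * cheb_U j x /\
  cheb_U (S j) x = cheb_T j x + x * cheb_U j x.
Proof. unfold cheb_T, cheb_U; simpl; destruct (cheb j x); auto. Qed.

Lemma Cexpi_INR_mul (j : nat) (t : R) :
  Cexpi (INR j * t) = (cheb_T j (cos t), sin t * cheb_U j (cos t)).
Proof.
  induction j as [|j IH].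
  - unfold Cexpi, cheb_T, cheb_U; simpl.
    rewrite Rmult_0_l, cos_0, sin_0; f_equal; ring.
  - unfold Cexpi in *; injection IH as IHc IHs.
    destruct (cheb_S j (cos t)) as [-> ->].
    rewrite S_INR, Rmult_plus_distr_r, Rmult_1_l, cos_plus, sin_plus, IHc, IHs.
    f_equal; [|ring].
    replace (sin t * cheb_U j (cos t) * sin t) with (sin t ^ 2 * cheb_U j (cos t)) by ring.
    rewrite sin_pow2; ring.
Qed.

Lemma continuity_cheb (j : nat) : continuity (cheb_T j) /\ continuity (cheb_U j).
Proof.
  induction j as [|j [HT HU]].
  - unfold cheb_T, cheb_U; simpl; split; intros x; apply continuity_const; intros ? ?; reflexivity.
  - split; intros x.
    + apply (continuity_pt_locally_ext (fun y => y * cheb_T j y - (1 - y^2) * cheb_U j y)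
               _ 1 x Rlt_0_1); [intros y _; symmetry; apply cheb_S | reg].
    + apply (continuity_pt_locally_ext (fun y => cheb_T j y + y * cheb_U j y)
               _ 1 x Rlt_0_1); [intros y _; symmetry; apply cheb_S | reg].
Qed.

Fixpoint cheb_sum_T (l : list R) (j : nat) (x : R) : R :=
  match l with nil => 0 | a :: l => a * cheb_T j x + cheb_sum_T l (S j) x end.
Fixpoint cheb_sum_U (l : list R) (j : nat) (x : R) : R :=
  match l with nil => 0 | a :: l => a * cheb_U j x + cheb_sum_U l (S j) x end.

Lemma continuity_cheb_sum (l : list R) (j : nat) :
  continuity (cheb_sum_T l j) /\ continuity (cheb_sum_U l j).
Proof.
  revert j; induction l as [|a l IH]; intros j; simpl.
  - split; apply continuity_const; intros ? ?; reflexivity.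
  - destruct (continuity_cheb j) as [HT HU]; destruct (IH (S j)) as [HlT HlU].
    split; reg.
Qed.

Lemma trig_poly_aux_cheb (l : list R) (j : nat) (t : R) :
  trig_poly_aux l j t = (cheb_sum_T l j (cos t), sin t * cheb_sum_U l j (cos t)).
Proof.
  revert j; induction l as [|a l IH]; intros j; simpl.
  - unfold RtoC; f_equal; ring.
  - rewrite IH, Cexpi_INR_mul; unfold Cplus, Cmult, RtoC; simpl; f_equal; ring.
Qed.

Lemma trig_poly_cheb (l : list R) (t : R) :
  trig_poly l t = (cheb_sum_T l 0 (cos t), sin t * cheb_sum_U l 0 (cos t)).
Proof. apply trig_poly_aux_cheb. Qed.

Definition sqmod_poly (l : list R) (x : R) : R :=
  cheb_sum_T l 0 x ^ 2 + (1 - x^2) * cheb_sum_U l 0 x ^ 2.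

Definition re_mul_conj_poly (l m : list R) (x : R) : R :=
  cheb_sum_T l 0 x * cheb_sum_T m 0 x + (1 - x^2) * cheb_sum_U l 0 x * cheb_sum_U m 0 x.

Ltac expand_cheb :=
  unfold sqmod_poly, re_mul_conj_poly; simpl; unfold cheb_T, cheb_U; simpl.

Lemma sqmod_poly_nonneg (l : list R) (x : R) : -1 <= x <= 1 -> 0 <= sqmod_poly l x.
Proof.
  intros Hx; unfold sqmod_poly.
  apply Rplus_le_le_0_compat; [apply pow2_ge_0 | apply Rmult_le_pos; [nra | apply pow2_ge_0]].
Qed.

Lemma continuity_sqmod_poly (l : list R) : continuity (sqmod_poly l).
Proof. destruct (continuity_cheb_sum l 0); unfold sqmod_poly; reg. Qed.

Lemma continuity_re_mul_conj_poly (l m : list R) : continuity (re_mul_conj_poly l m).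
Proof.
  destruct (continuity_cheb_sum l 0), (continuity_cheb_sum m 0); unfold re_mul_conj_poly; reg.
Qed.

Lemma Cmod_trig_poly (l : list R) (t : R) :
  Cmod (trig_poly l t) = sqrt (sqmod_poly l (cos t)).
Proof.
  rewrite trig_poly_cheb; unfold Cmod, sqmod_poly; cbn [fst snd].
  rewrite <- sin_pow2; f_equal; ring.
Qed.

Lemma trig_poly_neq0 (l : list R) (t : R) : 0 < sqmod_poly l (cos t) -> trig_poly l t <> 0.
Proof.
  intros Hl H0; apply (f_equal Cmod) in H0.
  rewrite Cmod_trig_poly, Cmod_0 in H0; apply sqrt_lt_R0 in Hl; lra.
Qed.

Lemma Re_div_trig_poly (l m : list R) (t : R) :
  0 < sqmod_poly m (cos t) ->
  Re (Cdiv (trig_poly l t) (trig_poly m t)) = re_mul_conj_poly l m (cos t) / sqmod_poly m (cos t).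
Proof.
  unfold sqmod_poly, re_mul_conj_poly; rewrite !trig_poly_cheb, <- !sin_pow2; intros Hm.
  unfold Cdiv, Cinv, Cmult, Re; simpl; field; lra.
Qed.

Definition gbdf4_q (u : R) : R := 14/9 + 20/3*u + 7*u^2 + 8/3*u^3 + 1/3*u^4.
Definition gbdf4_r (u : R) : R :=
  25/6 + 190/9*u + 655/18*u^2 + 268/9*u^3 + 227/18*u^4 + 8/3*u^5 + 2/9*u^6.

Lemma sqmod_gbdf4_a_expansion (b x : R) :
  sqmod_poly (gbdf4_a b) x
  = 1 + (1 - x) / 6 - gbdf4_q (b - 1) * (1 - x)^2 + gbdf4_r (b - 1) * (1 - x)^3.
Proof. unfold gbdf4_a, gbdf4_q, gbdf4_r; expand_cheb; field. Qed.

Lemma gbdf4_discriminant_pos (u : R) : 0 <= u -> 4 * gbdf4_q u ^ 3 < 27 * gbdf4_r u ^ 2.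
Proof.
  intros Hu.
  assert (Hpow : forall k, 0 <= u ^ k) by (intros; apply pow_le, Hu).
  assert (27 * gbdf4_r u ^ 2 - 4 * gbdf4_q u ^ 3
          = 1322971/2916 + 369070/81*u + 345383/18*u^2 + 3659458/81*u^3
            + 21777617/324*u^4 + 1818934/27*u^5 + 2541017/54*u^6 + 627172/27*u^7
            + 872761/108*u^8 + 52360/27*u^9 + 2750/9*u^10 + 256/9*u^11 + 32/27*u^12)
    by (unfold gbdf4_q, gbdf4_r; field).
  pose proof (Hpow 1%nat); pose proof (Hpow 2%nat); pose proof (Hpow 3%nat);
  pose proof (Hpow 4%nat); pose proof (Hpow 5%nat); pose proof (Hpow 6%nat);
  pose proof (Hpow 7%nat); pose proof (Hpow 8%nat); pose proof (Hpow 9%nat);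
  pose proof (Hpow 10%nat); pose proof (Hpow 11%nat); pose proof (Hpow 12%nat).
  lra.
Qed.

Lemma sqmod_gbdf4_a_pos (b x : R) : 1 <= b -> x <= 1 -> 0 < sqmod_poly (gbdf4_a b) x.
Proof.
  intros Hb Hx; rewrite sqmod_gbdf4_a_expansion.
  assert (0 < 1 - gbdf4_q (b - 1) * (1 - x)^2 + gbdf4_r (b - 1) * (1 - x)^3).
  { apply cubic_pos_of_discriminant; [| lra | apply gbdf4_discriminant_pos; lra].
    unfold gbdf4_r; assert (Hpow : forall k, 0 <= (b - 1) ^ k) by (intros; apply pow_le; lra).
    pose proof (Hpow 2%nat); pose proof (Hpow 3%nat); pose proof (Hpow 4%nat);
    pose proof (Hpow 5%nat); pose proof (Hpow 6%nat); lra. }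
  lra.
Qed.

Lemma sqmod_gbdf4_a_1 (b : R) : sqmod_poly (gbdf4_a b) 1 = 1.
Proof. unfold gbdf4_a; expand_cheb; field. Qed.

Lemma sqmod_gbdf4_a_m1 (b : R) :
  sqmod_poly (gbdf4_a b) (-1) = (4 * (b^3 + 3*b^2 + b - 1) / 3) ^ 2.
Proof. unfold gbdf4_a; expand_cheb; field. Qed.

Lemma sqmod_gbdf4_c_m1 (b : R) :
  sqmod_poly (gbdf4_c b) (-1) = ((4*b^3 + 18*b^2 + 20*b + 3) / 3) ^ 2.
Proof. unfold gbdf4_c; expand_cheb; field. Qed.

Lemma re_mul_conj_gbdf4_m1 (b : R) :
  re_mul_conj_poly (gbdf4_b b) (gbdf4_a b) (-1)
  = (4 * (b^3 + 3*b^2 + b - 1) / 3) * ((4*b^3 + 6*b^2 - 4*b - 3) / 3).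
Proof. unfold gbdf4_a, gbdf4_b; expand_cheb; field. Qed.

Section GBDF4Symbols.

Variable b : R.
Hypothesis Hb : 1 <= b.

Let a_pos (x : R) : -1 <= x <= 1 -> 0 < sqmod_poly (gbdf4_a b) x.
Proof. intros Hx; apply sqmod_gbdf4_a_pos; [exact Hb | apply Hx]. Qed.

Let cubic_a_pos : 0 < b^3 + 3*b^2 + b - 1.
Proof. assert (1 <= b^2) by nra; assert (1 <= b^3) by nra; lra. Qed.

Lemma sigmaF_fun_cos (t : R) : sigmaF_fun b t = / sqrt (sqmod_poly (gbdf4_a b) (cos t)).
Proof.
  unfold sigmaF_fun; rewrite Cmod_inv, Cmod_trig_poly;
    [reflexivity | apply trig_poly_neq0, a_pos, COS_bound].
Qed.

Lemma sigmaE_fun_cos (t : R) :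
  sigmaE_fun b t = sqrt (sqmod_poly (gbdf4_c b) (cos t) / sqmod_poly (gbdf4_a b) (cos t)).
Proof.
  unfold sigmaE_fun; rewrite Cmod_div, !Cmod_trig_poly, sqrt_div_alt;
    [reflexivity | apply a_pos, COS_bound | apply trig_poly_neq0, a_pos, COS_bound].
Qed.

Lemma lambdaI_fun_cos (t : R) :
  lambdaI_fun b t
  = re_mul_conj_poly (gbdf4_b b) (gbdf4_a b) (cos t) / sqmod_poly (gbdf4_a b) (cos t).
Proof. apply Re_div_trig_poly, a_pos, COS_bound. Qed.

Lemma sigmaF_fun_0 : sigmaF_fun b 0 = 1.
Proof. rewrite sigmaF_fun_cos, cos_0, sqmod_gbdf4_a_1, sqrt_1; apply Rinv_1. Qed.

Lemma sigmaE_fun_PI :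
  sigmaE_fun b PI = (4*b^3 + 18*b^2 + 20*b + 3) / (4 * (b^3 + 3*b^2 + b - 1)).
Proof.
  rewrite sigmaE_fun_cos, cos_PI, sqmod_gbdf4_c_m1, sqmod_gbdf4_a_m1.
  replace (((4*b^3 + 18*b^2 + 20*b + 3) / 3) ^ 2 / (4 * (b^3 + 3*b^2 + b - 1) / 3) ^ 2)
    with (((4*b^3 + 18*b^2 + 20*b + 3) / (4 * (b^3 + 3*b^2 + b - 1))) ^ 2) by (field; lra).
  apply sqrt_pow2, Rdiv_le_0_compat; nra.
Qed.

Lemma lambdaI_fun_PI :
  lambdaI_fun b PI = (4*b^3 + 6*b^2 - 4*b - 3) / (4 * (b^3 + 3*b^2 + b - 1)).
Proof.
  rewrite lambdaI_fun_cos, cos_PI, re_mul_conj_gbdf4_m1, sqmod_gbdf4_a_m1; field; lra.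
Qed.

Lemma sigmaF_fun_max :
  exists x, -1 <= x <= 1 /\ IsMaxOn (sigmaF_fun b) (/ sqrt (sqmod_poly (gbdf4_a b) x)).
Proof.
  apply (IsMaxOn_cos_comp _ (fun x => / sqrt (sqmod_poly (gbdf4_a b) x))); [exact sigmaF_fun_cos|].
  intros x Hx; pose proof (continuity_sqmod_poly (gbdf4_a b)); pose proof (a_pos x Hx).
  reg; [lra | apply Rgt_not_eq, sqrt_lt_R0; lra].
Qed.

Lemma sigmaE_fun_max :
  exists x, -1 <= x <= 1 /\
    IsMaxOn (sigmaE_fun b) (sqrt (sqmod_poly (gbdf4_c b) x / sqmod_poly (gbdf4_a b) x)).
Proof.
  apply (IsMaxOn_cos_comp _ (fun x => sqrt (sqmod_poly (gbdf4_c b) x / sqmod_poly (gbdf4_a b) x)));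
    [exact sigmaE_fun_cos|].
  intros x Hx; pose proof (continuity_sqmod_poly (gbdf4_a b)); pose proof (a_pos x Hx).
  pose proof (continuity_sqmod_poly (gbdf4_c b)); pose proof (sqmod_poly_nonneg (gbdf4_c b) x Hx).
  reg; [lra | apply Rdiv_le_0_compat; lra].
Qed.

Lemma lambdaI_fun_min :
  exists x, -1 <= x <= 1 /\
    IsMinOn (lambdaI_fun b)
      (re_mul_conj_poly (gbdf4_b b) (gbdf4_a b) x / sqmod_poly (gbdf4_a b) x).
Proof.
  apply (IsMinOn_cos_comp _
           (fun x => re_mul_conj_poly (gbdf4_b b) (gbdf4_a b) x / sqmod_poly (gbdf4_a b) x));
    [exact lambdaI_fun_cos|].
  intros x Hx; pose proof (continuity_sqmod_poly (gbdf4_a b)); pose proof (a_pos x Hx).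
  pose proof (continuity_re_mul_conj_poly (gbdf4_b b) (gbdf4_a b)).
  reg; lra.
Qed.

End GBDF4Symbols.

(* Each difference below is a cubic in x, nonnegative on [-1, 1] with a near-double root at the
   point x0 appearing in the hint; lra combines (x - x0)^2 (1 - x), (x - x0)^2 and the
   interval constraints. *)

Lemma sigmaF_bound_9 (x : R) : -1 <= x <= 1 -> / sqrt (sqmod_poly (gbdf4_a 9) x) <= 49/45.
Proof.
  intros Hx; replace (49/45) with (/ (45/49)) by field; apply inv_sqrt_le; [lra|].
  assert (0 <= (x - 99/100)^2 * (1 - x)) by (apply Rmult_le_pos; [apply pow2_ge_0 | lra]).
  pose proof (pow2_ge_0 (x - 99/100)).
  unfold gbdf4_a; expand_cheb; lra.
Qed.

Lemma sigmaE_bound_9 (x : R) : -1 <= x <= 1 ->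
  sqrt (sqmod_poly (gbdf4_c 9) x / sqmod_poly (gbdf4_a 9) x) <= 2319/1960.
Proof.
  intros Hx; apply sqrt_div_le; [apply sqmod_gbdf4_a_pos; lra | lra |].
  assert (0 <= (x - 9647/10000)^2 * (1 - x)) by (apply Rmult_le_pos; [apply pow2_ge_0 | lra]).
  pose proof (pow2_ge_0 (x - 9647/10000)).
  unfold gbdf4_a, gbdf4_c; expand_cheb; lra.
Qed.

Lemma lambdaI_bound_9 (x : R) : -1 <= x <= 1 ->
  1641/1960 <= re_mul_conj_poly (gbdf4_b 9) (gbdf4_a 9) x / sqmod_poly (gbdf4_a 9) x.
Proof.
  intros Hx.
  assert (Hpos : 0 < sqmod_poly (gbdf4_a 9) x) by (apply sqmod_gbdf4_a_pos; lra).
  apply (Rle_div_r _ _ _ Hpos).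
  assert (0 <= (x - 1931/2000)^2 * (1 - x)) by (apply Rmult_le_pos; [apply pow2_ge_0 | lra]).
  pose proof (pow2_ge_0 (x - 1931/2000)).
  unfold gbdf4_a, gbdf4_b; expand_cheb; lra.
Qed.

Theorem mainTheorem8 (beta : R) (Hb : 1 <= beta) :
  exists sF sE lI : R,
    IsMaxOn (sigmaF_fun beta) sF /\
    IsMaxOn (sigmaE_fun beta) sE /\
    IsMinOn (lambdaI_fun beta) lI /\
    sF >= 1 /\
    sE >= (4*beta^3 + 18*beta^2 + 20*beta + 3) / (4 * (beta^3 + 3*beta^2 + beta - 1)) /\
    lI <= (4*beta^3 + 6*beta^2 - 4*beta - 3) / (4 * (beta^3 + 3*beta^2 + beta - 1)) /\
    lI / sE <= (4*beta^3 + 6*beta^2 - 4*beta - 3) / (4*beta^3 + 18*beta^2 + 20*beta + 3) /\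
    (beta = 9 ->
       sF <= 49 / 45 /\ sE <= 2319 / 1960 /\ lI >= 1641 / 1960 /\
       lI / sE >= 547 / 773).
Proof.
  destruct (sigmaF_fun_max beta Hb) as [xF [HxF MF]].
  destruct (sigmaE_fun_max beta Hb) as [xE [HxE ME]].
  destruct (lambdaI_fun_min beta Hb) as [xI [HxI MI]].
  set (sF := / sqrt _) in MF; set (sE := sqrt _) in ME; set (lI := _ / _) in MI.
  pose proof PI_RGT_0.
  pose proof (proj2 MF 0 ltac:(lra)) as GF; rewrite sigmaF_fun_0 in GF by exact Hb.
  pose proof (proj2 ME PI ltac:(lra)) as GE; rewrite sigmaE_fun_PI in GE by exact Hb.
  pose proof (proj2 MI PI ltac:(lra)) as GI; rewrite lambdaI_fun_PI in GI by exact Hb.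
  assert (beta <= beta^2) by nra; assert (1 <= beta^3) by nra.
  assert (0 < (4*beta^3 + 18*beta^2 + 20*beta + 3) / (4 * (beta^3 + 3*beta^2 + beta - 1)))
    by (apply Rdiv_lt_0_compat; lra).
  exists sF, sE, lI; do 3 (split; [assumption|]).
  split; [apply Rle_ge, GF|]; split; [apply Rle_ge, GE|]; split; [exact GI|]; split.
  - eapply Rle_trans; [apply div_le_div; [eassumption | exact GE | | exact GI] |].
    + apply Rdiv_le_0_compat; lra.
    + right; field; lra.
  - intros ->.
    pose proof (sigmaE_bound_9 xE HxE) as BE; pose proof (lambdaI_bound_9 xI HxI) as BI.
    split; [apply sigmaF_bound_9, HxF|]; split; [exact BE|]; split; [apply Rle_ge, BI|].
    apply Rle_ge; replace (547/773) with ((1641/1960) / (2319/1960)) by field.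
    apply div_le_div; [eapply Rlt_le_trans; eassumption | exact BE | | exact BI].
    eapply Rle_trans; [| exact BI]; lra.
Qed.
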